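(* For every even $n\ge0$, every integer $r\ge0$ and every graph $G$ of order $n$, the degree $d(G)$ is a non-negative integer, and there is a constant $C$ independent of $p$ such that $\mathcal A_r(G)\le C\,N^{-d(G)}$ for all $p\in(0,1)$; i.e. at fixed order $n$ the amplitude scales at most like $N^{-d(G)}$ as $N\to\infty$.
   Context: Fix $p\in(0,1)$ and $N:=1/(1-p)$. Trees. A 2-rooted ternary tree of order $n$ is a finite plane tree $U$ with a root vertex of degree 2 and $n$ true vertices of degree 4; each edge is internal or a leaf (half-edge). Each true vertex $v$ has parent edge $e_1(v)$ (towards the root) and ordered children edges $e_2(v),e_3(v),e_4(v)$. One root edge has type $\alpha$, the other $\bar\alpha$; if $e_1(v)$ has type $\tau$ then $e_2(v)$ has the other type and $e_3(v),e_4(v)$ have type $\tau$. Leaves of type $\alpha$ are leaves, of type $\bar\alpha$ anti-leaves ($n+1$ each). A heap-ordering labels true vertices bijectively by $\{1,\dots,n\}$, increasing from parent to child. Graphs. For even $n$, a graph of order $n$ is $G=(U,w,w')$: $U$ heap-ordered; $w$ a bijection leaves $\to$ anti-leaves (dashed edges; internal edges are solid); $w'$ a partition of true vertices into $n/2$ pairs (wavy edges) with, for each pair $\{v,v'\}$ ($v$ of smaller label), one of eight propagators in $(S,j,k)=(S_v,j_v,k_v)$, $(S',j',k')=(S_{v'},j_{v'},k_{v'})$: $\delta_{jj'}\delta_{kk'}$, $\delta_{j,S-j'}\delta_{kk'}$, $\delta_{jj'}\delta_{k,S-k'}$, $\delta_{j,S-j'}\delta_{k,S-k'}$, $\delta_{jk'}\delta_{kj'}$,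 $\delta_{j,S-k'}\delta_{kj'}$, $\delta_{jk'}\delta_{k,S-j'}$, $\delta_{j,S-k'}\delta_{k,S-j'}$, together with $S=S'$. Amplitude. A momentum attribution gives each true vertex $S_v\ge0$, $0\le j_v,k_v\le S_v$ and momenta $j_v,S_v-j_v,k_v,S_v-k_v$ to the ends at $v$ of $e_1,\dots,e_4$. For $r\in\mathbb N$ it is admissible if solid edges get equal momenta at both ends, both root edges carry momentum $r$, every dashed edge $e$ joins leaves of equal momentum $m(e)$, and every wavy edge satisfies $S_v=S_{v'}$ and its propagator. $\mathcal A_r(G):=N^{-n}\sum_{\text{admissible}}\prod_{e\text{ dashed}}p^{m(e)}$. Faces and degree. Call the edge-ends at true vertices and at the root slots ($2n+2$ slots). Each propagator of a wavy edge $\{v,v'\}$, together with $S=S'$, identifies each of $j,S-j,k,S-k$ of $v$ with one momentum of $v'$, hence pairs each slot of $v$ with a slot of $v'$; these four pairs are the corners of that wavy edge ($2n$ corners in all). Let $\Gamma$ be the graph on the set of slots whose edges are the solid and dashed edges of $G$, the corners, and one extra edge joining the two root slots; every slot has degree 2, and the connected components (cycles) of $\Gamma$ are the faces; $F(G)$ is their number. Let $E$ be the $(n/2)\times F(G)$ matrix with rows indexed by wavy edges $\omega=\{v,v'\}$ ($v$ of smaller label) and columns by faces, with $E_{\omega f}$ = (number of corners of $\omega$ lying in $f$ that contain $e_1(v)$ or $e_2(v)$) minus (number of corners of $\omega$ lying in $f$ that contain $e_3(v)$ or $e_4(v)$). Let $R(G)$ be the rank of $E$ ($0$ if $n=0$).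 The degree is $d(G):=n-F(G)+R(G)+1$. *)

From HB Require Import structures.
From mathcomp Require Import all_boot all_order all_algebra.
From mathcomp Require Import all_classical all_reals.
From mathcomp Require Import esum.
Set Implicit Arguments.
Unset Strict Implicit.
Unset Printing Implicit Defensive.
Import Order.TTheory GRing.Theory Num.Theory.

(* Encoding of a heap-ordered 2-rooted ternary tree of order n.             *)
(* True vertices are identified with their heap labels, shifted to 'I_n     *)
(* (label i+1 <-> i : 'I_n).                                                *)
(* A "position" is a place below which an edge hangs:                       *)
(*   inl 0  : the root edge of type alpha,                                  *)
(*   inl 1  : the root edge of type anti-alpha,                             *)
(*   inr (u, c) : the child edge e_{c+2}(u) of the true vertex u (c : 'I_3). *)
(* The tree is given by the map parent : v |-> position of e_1(v); a        *)
(* position not of the form parent v is a leaf/anti-leaf (half-edge).       *)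
Definition pos (n : nat) := ('I_2 + 'I_n * 'I_3)%type.

(* Slots: the edge-ends at the root (inl i, the root end of root edge i) and *)
(* at the true vertices (inr (v, i) is the end at v of e_{i+1}(v)).          *)
Definition slot (n : nat) := ('I_2 + 'I_n * 'I_4)%type.

Definition slot_of_pos n (p : pos n) : slot n :=
  match p with
  | inl i => inl i
  | inr (u, c) => inr (u, lift ord0 c)
  end.

Definition vslot n (v : 'I_n) (i : 'I_4) : slot n := inr (v, i).

(* Validity of a heap-ordered tree: each position carries at most one       *)
(* vertex (plane structure) and labels increase from parent to child.        *)
Definition tree_wf n (par : 'I_n -> pos n) : Prop :=
  injective par /\
  (forall (v u : 'I_n) (c : 'I_3), par v = inr (u, c) -> (u < v)%N).

(* Type of the edge hanging at a position (true = alpha, false = anti-alpha), *)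
(* computed by walking up to the root (fuel n.+1 suffices, labels decrease).  *)
Fixpoint ptype_f n (par : 'I_n -> pos n) (k : nat) (p : pos n) : bool :=
  match p with
  | inl i => i == ord0
  | inr (u, c) =>
      match k with
      | 0 => true
      | k'.+1 => let t := ptype_f par k' (par u) in
                 if c == ord0 then ~~ t else t
      end
  end.
Definition ptype n (par : 'I_n -> pos n) (p : pos n) : bool :=
  ptype_f par n.+1 p.

Definition occupied n (par : 'I_n -> pos n) (p : pos n) : bool :=
  [exists v, par v == p].
Definition is_leaf n (par : 'I_n -> pos n) (p : pos n) : bool :=
  ~~ occupied par p && ptype par p.
Definition is_antileaf n (par : 'I_n -> pos n) (p : pos n) : bool :=
  ~~ occupied par p && ~~ ptype par p.

(* Graphs.  gw = dashed edges (leaves -> anti-leaves), gpartner = wavy      *)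
(* pairing (fixed-point-free involution), gprop v = propagator index (0..7, *)
(* in the order of the paper) of the wavy edge {v, gpartner v}; it is only  *)
(* read at the vertex of smaller label.                                     *)
Record graph (n : nat) := Graph {
  gpar : 'I_n -> pos n;
  gw : pos n -> pos n;
  gpartner : 'I_n -> 'I_n;
  gprop : 'I_n -> 'I_8 }.

Definition graph_wf n (G : graph n) : Prop :=
  ~~ odd n /\
  tree_wf (gpar G) /\
  (forall p, is_leaf (gpar G) p -> is_antileaf (gpar G) (gw G p)) /\
  (forall p q, is_leaf (gpar G) p -> is_leaf (gpar G) q ->
      gw G p = gw G q -> p = q) /\
  (forall q, is_antileaf (gpar G) q ->
      exists2 p, is_leaf (gpar G) p & gw G p = q) /\
  (forall v, gpartner G v != v /\ gpartner G (gpartner G v) = v).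

(* wavy edges, indexed by their vertex of smaller label *)
Definition wavy n (G : graph n) : {set 'I_n} :=
  [set v : 'I_n | (v < gpartner G v)%N].

Definition prop_holds (i : 'I_8) (S j k S' j' k' : nat) : bool :=
  (S == S') &&
  match val i with
  | 0 => (j == j') && (k == k')
  | 1 => (j == S - j') && (k == k')
  | 2 => (j == j') && (k == S - k')
  | 3 => (j == S - j') && (k == S - k')
  | 4 => (j == k') && (k == j')
  | 5 => (j == S - k') && (k == j')
  | 6 => (j == k') && (k == S - j')
  | _ => (j == S - k') && (k == S - j')
  end.

(* The slot pairing (corners) induced by each propagator: slot a of v       *)
(* (a = 0,1,2,3 for momenta j, S-j, k, S-k) is paired with slot            *)
(* prop_corner i a of v'.                                                   *)
Definition prop_corner (i : 'I_8) (a : 'I_4) : 'I_4 :=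
  let l := match val i with
           | 0 => [:: 0; 1; 2; 3]
           | 1 => [:: 1; 0; 2; 3]
           | 2 => [:: 0; 1; 3; 2]
           | 3 => [:: 1; 0; 3; 2]
           | 4 => [:: 2; 3; 0; 1]
           | 5 => [:: 3; 2; 0; 1]
           | 6 => [:: 2; 3; 1; 0]
           | _ => [:: 3; 2; 1; 0]
           end%N in
  inord (nth 0%N l a).

Definition attribution (n : nat) := {ffun 'I_n -> nat * nat * nat}.

Definition aS n (a : attribution n) v := (a v).1.1.
Definition aj n (a : attribution n) v := (a v).1.2.
Definition ak n (a : attribution n) v := (a v).2.

Definition mom n (r : nat) (a : attribution n) (s : slot n) : nat :=
  match s with
  | inl _ => r
  | inr (v, i) =>
      match val i with
      | 0 => aj a v
      | 1 => aS a v - aj a v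
      | 2 => ak a v
      | _ => aS a v - ak a v
      end
  end.

Definition admissible n (G : graph n) (r : nat) (a : attribution n) : Prop :=
  (forall v, aj a v <= aS a v /\ ak a v <= aS a v)%N /\
  (* solid edges (including root edges leading to a true vertex) *)
  (forall v, mom r a (slot_of_pos (gpar G v)) = mom r a (vslot v ord0)) /\
  (forall p, is_leaf (gpar G) p ->
      mom r a (slot_of_pos p) = mom r a (slot_of_pos (gw G p))) /\
  (forall v, v \in wavy G ->
      prop_holds (gprop G v) (aS a v) (aj a v) (ak a v)
        (aS a (gpartner G v)) (aj a (gpartner G v)) (ak a (gpartner G v))).

Local Open Scope ring_scope.

Definition Nconst (R : realType) (p : R) : R := (1 - p)^-1.

(* amplitude A_r(G) = N^{-n} * sum over admissible attributions of          *)
(* prod over dashed edges of p^{m(e)}; dashed edges <-> leaves.             *)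
Definition amplitude (R : realType) (p : R) n (G : graph n) (r : nat)
  : \bar R :=
  ((Nconst p ^- n)%:E *
   \esum_(a in [set a : attribution n | admissible G r a])
      (\prod_(q : pos n | is_leaf (gpar G) q)
          p ^+ (mom r a (slot_of_pos q)))%:E)%E.

Definition gamma_adj n (G : graph n) (x y : slot n) : bool :=
  [exists v, (x == slot_of_pos (gpar G v)) && (y == vslot v 0)] ||
  [exists q, [&& is_leaf (gpar G) q, x == slot_of_pos q &
                 y == slot_of_pos (gw G q)]] ||
  [exists v, [exists i, [&& v \in wavy G, x == vslot v i &
                 y == vslot (gpartner G v) (prop_corner (gprop G v) i)]]] ||
  ((x == inl ord0) && (y == inl (lift ord0 ord0))).

Definition gamma_rel n (G : graph n) : rel (slot n) :=
  fun x y => gamma_adj G x y || gamma_adj G y x.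

Definition faces n (G : graph n) : {set {set slot n}} :=
  [set [set y | connect (gamma_rel G) x y] | x : slot n].

Definition nfaces n (G : graph n) : nat := #|faces G|.

Definition Ematrix n (G : graph n) : 'M[rat]_(#|wavy G|, #|faces G|) :=
  \matrix_(i, f)
    let v : 'I_n := enum_val (A := wavy G) i in
    let fc : {set slot n} := enum_val (A := faces G) f in
    ((#|[set b : 'I_4 | (b < 2)%N && (vslot v b \in fc)]|)%:R -
     (#|[set b : 'I_4 | (2 <= b)%N && (vslot v b \in fc)]|)%:R).

Definition Erank n (G : graph n) : nat := \rank (Ematrix G).

Definition degree n (G : graph n) : int :=
  (n%:Z - (nfaces G)%:Z + (Erank G)%:Z + 1)%R.

(* An admissible attribution is constant along the cycles of Gamma, so its
   momenta form a vector on the faces; as j + (S - j) = k + (S - k) at every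
   true vertex, this vector lies in the kernel of the transpose of E.  Walking
   down the heap order, a kernel vector is determined by its values on n + 1
   chosen slots, so F - R <= n + 1, i.e. d(G) >= 0.  Fixing the root momentum
   to r removes one more dimension: an admissible attribution is determined by
   D <= F - R - 1 of its face momenta.  Each of these is at most 2^n L + r,
   where L is the total leaf momentum, so the sum of p^L over admissible
   attributions is at most a product of D geometric series, i.e. O(N^D), and
   A_r(G) = O(N^(D - n)) = O(N^(-d(G))). *)

From HB Require Import structures.
From mathcomp Require Import all_boot all_order all_algebra.
From mathcomp Require Import all_classical all_reals.
From mathcomp Require Import esum.
From mathcomp Require Import zify ring lra.
Set Implicit Arguments.
Unset Strict Implicit.
Unset Printing Implicit Defensive.
Import Order.TTheory GRing.Theory Num.Theory.
Local Open Scope ring_scope.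

Lemma geometric_sum_le (R : realFieldType) (x : R) (M : nat) :
  0 <= x < 1 -> \sum_(t < M) x ^+ t <= (1 - x)^-1.
Proof.
case/andP=> x0 x1; have x1_gt0 : 0 < 1 - x by rewrite subr_gt0.
have telescope : (1 - x) * \sum_(t < M) x ^+ t = 1 - x ^+ M.
  by rewrite -opprB mulNr -subrX1 opprB.
rewrite -(ler_pM2l x1_gt0) telescope mulfV ?lt0r_neq0 //.
by rewrite gerBl exprn_ge0.
Qed.

Lemma sum_expr_divn (R : pzSemiRingType) (x : R) (c M : nat) : (0 < c)%N ->
  \sum_(t < c * M) x ^+ (t %/ c) = c%:R * \sum_(s < M) x ^+ s.
Proof.
move=> c_gt0; elim: M => [|M IH]; first by rewrite muln0 !big_ord0 mulr0.
rewrite mulnS addnC big_split_ord /= IH big_ord_recr /= mulrDr; congr (_ + _).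
under eq_bigr => i _ do rewrite /= mulnC divnMDl // divn_small // addn0.
by rewrite sumr_const card_ord mulr_natl.
Qed.

Lemma sum_expr_divn_le (R : numDomainType) (x : R) (c M : nat) :
  (0 < c)%N -> 0 <= x ->
  \sum_(t < M) x ^+ (t %/ c) <= c%:R * \sum_(s < M) x ^+ s.
Proof.
move=> c_gt0 x0; rewrite -sum_expr_divn //.
rewrite (big_ord_widen (c * M) (fun t => x ^+ (t %/ c))) ?leq_pmull //.
rewrite [leRHS](bigID (fun t : 'I_(c * M) => (t < M)%N)) /= lerDl.
by apply: sumr_ge0 => t _; apply: exprn_ge0.
Qed.

Lemma sum_prod_expr_divn_le (R : realFieldType) (T : eqType) (D c : nat)
    (g : T -> {ffun 'I_D -> nat}) (s : seq T) (q : R) :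
  (0 < c)%N -> 0 <= q < 1 -> uniq s -> {in s &, injective g} ->
  \sum_(a <- s) \prod_i q ^+ (g a i %/ c) <= (c%:R / (1 - q)) ^+ D.
Proof.
move=> c_gt0 /andP[q0 q1] s_uniq g_inj.
pose M := (\sum_(a <- s) \sum_i g a i).+1.
have g_ltM a i : a \in s -> (g a i < M)%N.
  move=> sa; rewrite ltnS (bigD1_seq a) //= (bigD1 i) //= -addnA.
  exact: leq_addr.
pose gM a : {ffun 'I_D -> 'I_M} := [ffun i => inord (g a i)].
pose H (z : {ffun 'I_D -> 'I_M}) := \prod_i q ^+ (z i %/ c).
have H_ge0 z : 0 <= H z by apply: prodr_ge0 => i _; apply: exprn_ge0.
have -> : \sum_(a <- s) \prod_i q ^+ (g a i %/ c) = \sum_(z <- map gM s) H z.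
  rewrite big_map; apply: eq_big_seq => a sa; apply: eq_bigr => i _.
  by rewrite ffunE inordK ?g_ltM.
have gM_uniq : uniq (map gM s).
  rewrite map_inj_in_uniq // => a b sa sb /ffunP gMab.
  apply: g_inj => //; apply/ffunP => i; have := gMab i.
  by rewrite !ffunE => /(congr1 val); rewrite /= !inordK ?g_ltM.
apply: (@le_trans _ _ (\sum_z H z)).
  rewrite big_uniq // [leRHS](bigID [in map gM s]) /= lerDl.
  exact: sumr_ge0.
rewrite -(bigA_distr_bigA (fun i (t : 'I_M) => q ^+ (t %/ c))) /=.
rewrite -[D in leRHS]card_ord -prodr_const; apply: ler_prod => i _.
rewrite sumr_ge0 => [/=|t _]; last exact: exprn_ge0.
apply: le_trans (sum_expr_divn_le _ c_gt0 q0) _.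
by rewrite ler_wpM2l // geometric_sum_le ?q0.
Qed.

Lemma mxrank_leq_of_mul_injective (F : fieldType) m k l
    (A : 'M[F]_(m, k)) (P : 'M[F]_(k, l)) :
  (forall u : 'rV_k, (u <= A)%MS -> u *m P = 0 -> u = 0) -> (\rank A <= l)%N.
Proof.
move=> P_inj; rewrite -(mxrank_mul_ker A P).
have -> : (A :&: kermx P)%MS = 0.
  apply/row_matrixP => i; rewrite row0; apply: P_inj.
    exact: submx_trans (row_sub i _) (capmxSl _ _).
  by apply/sub_kermxP; apply: submx_trans (row_sub i _) (capmxSr _ _).
by rewrite mxrank0 addn0 rank_leq_col.
Qed.

Lemma mxrank_cap_kermx_lt (F : fieldType) m k l
    (A : 'M[F]_(m, k)) (P : 'M[F]_(k, l)) (u : 'rV_k) :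
  (u <= A)%MS -> u *m P != 0 -> (\rank (A :&: kermx P) < \rank A)%N.
Proof.
move=> uA uP_neq0; rewrite -(mxrank_mul_ker A P).
rewrite -[X in (X < _)%N]add0n ltn_add2r lt0n mxrank_eq0.
apply: contra uP_neq0 => /eqP AP0.
by have := submxMr P uA; rewrite AP0 => /submx0null ->.
Qed.

Lemma sub_maxrank_cols_eq0 (F : fieldType) m k (A : 'M[F]_(m, k)) (u : 'rV_k) :
  (u <= A)%MS -> (forall i, u 0 (maxrankfun A^T i) = 0) -> u = 0.
Proof.
move=> uA u_cols0; pose P := colsub (maxrankfun A^T) (1%:M : 'M[F]_k).
have rankAP : \rank (A *m P) = \rank A.
  by rewrite mulmx_colsub mulmx1 -mxrank_tr trmx_mxsub eq_maxrowsub mxrank_tr.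
have := mxrank_mul_ker A P; rewrite rankAP -[RHS]addn0 => /addnI /eqP.
rewrite mxrank_eq0 => /eqP capA0; apply/eqP.
rewrite -submx0 -capA0 sub_capmx uA; apply/sub_kermxP/rowP => i.
by rewrite mulmx_colsub mulmx1 !mxE.
Qed.

Lemma sum_mul_delta (R : pzSemiRingType) m (F : 'I_m -> R) (g : 'I_m) :
  \sum_f F f * (g == f)%:R = F g.
Proof.
rewrite (bigD1 g) //= eqxx mulr1 big1 ?addr0 // => f /negPf.
by rewrite eq_sym => ->; rewrite mulr0.
Qed.

Local Notation e1 := (ord0 : 'I_4).
Local Notation e2 := (lift ord0 ord0 : 'I_4).
Local Notation e3 := (lift ord0 (lift ord0 ord0) : 'I_4).
Local Notation e4 := (lift ord0 (lift ord0 (lift ord0 ord0)) : 'I_4).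

Lemma ord4_ind (P : 'I_4 -> Prop) : P e1 -> P e2 -> P e3 -> P e4 -> forall b, P b.
Proof.
move=> P1 P2 P3 P4 [[|[|[|[|//]]]] lt_b4].
- by rewrite (_ : Ordinal _ = e1) //; apply: val_inj.
- by rewrite (_ : Ordinal _ = e2) //; apply: val_inj.
- by rewrite (_ : Ordinal _ = e3) //; apply: val_inj.
- by rewrite (_ : Ordinal _ = e4) //; apply: val_inj.
Qed.

Lemma card_set_ord4 (P : 'I_4 -> bool) :
  #|[set b | P b]| = (P e1 + P e2 + P e3 + P e4)%N.
Proof.
rewrite -sum1_card big_mkcond /= !big_ord_recl big_ord0 !inE.
by case: (P e1); case: (P e2); case: (P e3); case: (P e4).
Qed.

Lemma prop_corner_surj (i : 'I_8) (b : 'I_4) : exists a, prop_corner i a = b.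
Proof.
suff [a /eqP ea] : exists a, val (prop_corner i a) == val b by exists a; apply: val_inj.
case: i => [[|[|[|[|[|[|[|[|//]]]]]]]] ?]; case: b => [[|[|[|[|//]]]] ?];
  first [ by exists e1; rewrite /prop_corner /= inordK
        | by exists e2; rewrite /prop_corner /= inordK
        | by exists e3; rewrite /prop_corner /= inordK
        | by exists e4; rewrite /prop_corner /= inordK ].
Qed.

Section Faces.
Variables (n : nat) (G : graph n).
Local Notation F := #|faces G|.
Local Notation conn := (connect (gamma_rel G)).

Lemma gamma_rel_sym : symmetric (gamma_rel G).
Proof. by move=> x y; rewrite /gamma_rel orbC. Qed.

Definition face (s : slot n) : {set slot n} := [set y | conn s y].

Lemma face_in_faces s : face s \in faces G.
Proof. by apply/imsetP; exists s. Qed.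

Definition face_idx (s : slot n) : 'I_F := enum_rank_in (face_in_faces s) (face s).

Lemma enum_val_face_idx s : enum_val (face_idx s) = face s.
Proof. by rewrite enum_rankK_in ?face_in_faces. Qed.

Lemma face_idxP x y : reflect (conn x y) (face_idx x == face_idx y).
Proof.
apply: (iffP eqP) => [/(congr1 enum_val)|xy].
  by rewrite !enum_val_face_idx => /setP/(_ y); rewrite !inE connect0.
apply: enum_val_inj; rewrite !enum_val_face_idx; apply/setP => z.
by rewrite !inE (same_connect (sym_connect_sym gamma_rel_sym) xy).
Qed.

Lemma face_idx_adj x y : gamma_adj G x y -> face_idx x = face_idx y.
Proof. by move=> xy; apply/eqP/face_idxP/connect1; rewrite /gamma_rel xy. Qed.

Lemma mem_enum_val_face s (f : 'I_F) :
  (s \in enum_val (A := faces G) f) = (face_idx s == f).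
Proof.
have /imsetP[x _ fx] := enum_valP f.
have -> : f = face_idx x by apply: enum_val_inj; rewrite enum_val_face_idx fx.
by rewrite enum_val_face_idx inE eq_sym; apply/idP/face_idxP.
Qed.

Definition face_rep (f : 'I_F) : slot n :=
  odflt (inl ord0) [pick s | face_idx s == f].

Lemma face_idx_rep f : face_idx (face_rep f) = f.
Proof.
rewrite /face_rep; case: pickP => [s /eqP //|no_rep].
have /imsetP[x _ fx] := enum_valP f.
by move: (no_rep x); rewrite -mem_enum_val_face fx inE connect0.
Qed.

Lemma gamma_adj_solid v : gamma_adj G (slot_of_pos (gpar G v)) (vslot v e1).
Proof.
apply/orP; left; apply/orP; left; apply/orP; left.
by apply/existsP; exists v; rewrite !eqxx.
Qed.

Lemma gamma_adj_corner v b : v \in wavy G ->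
  gamma_adj G (vslot v b) (vslot (gpartner G v) (prop_corner (gprop G v) b)).
Proof.
move=> vw; apply/orP; left; apply/orP; right.
by apply/existsP; exists v; apply/existsP; exists b; rewrite vw !eqxx.
Qed.

Lemma gamma_adj_root : gamma_adj G (inl ord0) (inl (lift ord0 ord0)).
Proof. by rewrite /gamma_adj !eqxx !orbT. Qed.

Definition face_val (u : 'rV[rat]_F) (s : slot n) : rat := u 0 (face_idx s).

Definition slot_eval_mx k (sl : 'I_k -> slot n) : 'M[rat]_(F, k) :=
  \matrix_(f, c) (face_idx (sl c) == f)%:R.

Lemma slot_eval_mxE k (sl : 'I_k -> slot n) u c :
  (u *m slot_eval_mx sl) 0 c = face_val u (sl c).
Proof. by rewrite mxE; under eq_bigr do rewrite mxE; rewrite sum_mul_delta. Qed.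

Lemma Ematrix_row (u : 'rV[rat]_F) (i : 'I_#|wavy G|) :
  let v := enum_val i in
  (u *m (Ematrix G)^T) 0 i =
  face_val u (vslot v e1) + face_val u (vslot v e2)
  - face_val u (vslot v e3) - face_val u (vslot v e4).
Proof.
move=> v; rewrite mxE.
under eq_bigr do rewrite !mxE /= !card_set_ord4 /= !mem_enum_val_face !addn0 !add0n.
under eq_bigr do rewrite !natrD mulrBr !mulrDr.
by rewrite sumrB !big_split /= !sum_mul_delta opprD addrA.
Qed.

End Faces.

Section Degree.
Variables (n : nat) (G : graph n).
Hypothesis G_wf : graph_wf G.
Local Notation F := #|faces G|.

Lemma gpar_heap v u c : gpar G v = inr (u, c) -> (u < v)%N.
Proof. by case: G_wf => _ [[_ heap] _]; apply: heap. Qed.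

Lemma gpartner_neq v : gpartner G v != v.
Proof. by case: G_wf => _ [_ [_ [_ [_ /(_ v) []]]]]. Qed.

Lemma gpartnerK : involutive (gpartner G).
Proof. by case: G_wf => _ [_ [_ [_ [_ pairing]]]] v; case: (pairing v). Qed.

Lemma wavy_gpartner v : v \in wavy G -> gpartner G v \notin wavy G.
Proof. by rewrite !inE gpartnerK -leqNgt => /ltnW. Qed.

Lemma wavyN_gpartner v : v \notin wavy G ->
  gpartner G v \in wavy G /\ (gpartner G v < v)%N.
Proof.
rewrite !inE gpartnerK -leqNgt leq_eqVlt => /orP[/eqP/val_inj pv|->//].
by move: (gpartner_neq v); rewrite pv eqxx.
Qed.

(* Per wavy edge {v, v'} (v of smaller label) we record the slots of e2(v)
   and e3(v): e1(v) is tied to its parent edge, e4(v) to the other three by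
   the row of E, and every slot of v' is a corner partner of a slot of v. *)
Definition basis_slot (c : 'I_n.+1) : slot n :=
  match unlift ord0 c with
  | None => inl ord0
  | Some v => if v \in wavy G then vslot v e2 else vslot (gpartner G v) e3
  end.

Section KernelVector.
Variable u : 'rV[rat]_F.
Hypothesis u_kerE : u *m (Ematrix G)^T = 0.
Hypothesis u_basis0 : u *m slot_eval_mx G basis_slot = 0.

Lemma face_val_basis_slot c : face_val u (basis_slot c) = 0.
Proof. by rewrite -slot_eval_mxE u_basis0 mxE. Qed.

Lemma face_val_root_slot i : face_val u (inl i) = 0.
Proof.
have root0 := face_val_basis_slot ord0; rewrite /basis_slot unlift_none in root0.
have [->|->] : i = ord0 \/ i = lift ord0 ord0.
- by case: i => [[|[|//]] ?]; [left|right]; apply: val_inj.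
- exact: root0.
- by rewrite /face_val -(face_idx_adj (gamma_adj_root G)).
Qed.

Lemma face_val_vertex_slot (v : 'I_n) :
  (forall w : 'I_n, (w < v)%N -> forall b, face_val u (vslot w b) = 0) ->
  forall b, face_val u (vslot v b) = 0.
Proof.
move=> below0.
have [vw|vNw] := boolP (v \in wavy G); last first.
  have [pw pv_lt] := wavyN_gpartner vNw.
  move=> b; have [a <-] := prop_corner_surj (gprop G (gpartner G v)) b.
  have := face_idx_adj (gamma_adj_corner a pw); rewrite gpartnerK /face_val => <-.
  exact: below0.
have x1 : face_val u (vslot v e1) = 0.
  rewrite /face_val -(face_idx_adj (gamma_adj_solid G v)).
  case par_v: (gpar G v) => [i|[w c]]; first exact: face_val_root_slot.
  exact: below0 (gpar_heap par_v) _.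
have x2 : face_val u (vslot v e2) = 0.
  by have := face_val_basis_slot (lift ord0 v); rewrite /basis_slot liftK vw.
have x3 : face_val u (vslot v e3) = 0.
  have := face_val_basis_slot (lift ord0 (gpartner G v)).
  by rewrite /basis_slot liftK (negPf (wavy_gpartner vw)) gpartnerK.
have x4 : face_val u (vslot v e4) = 0.
  have := Ematrix_row u (enum_rank_in vw v).
  by rewrite /= enum_rankK_in // u_kerE mxE x1 x2 x3 => row0; lra.
exact: ord4_ind.
Qed.

Lemma kerE_basis_injective : u = 0.
Proof.
have vertex0 : forall k (v : 'I_n), (v < k)%N -> forall b, face_val u (vslot v b) = 0.
  elim=> [//|k IH] v; rewrite ltnS leq_eqVlt => /orP[/eqP vk|]; last exact: IH.
  by apply: face_val_vertex_slot => w; rewrite vk; apply: IH.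
apply/rowP => f; rewrite mxE -(face_idx_rep f) -/(face_val u _).
case: (face_rep f) => [i|[v b]]; first exact: face_val_root_slot.
exact: vertex0 (ltn_ord v) b.
Qed.

End KernelVector.

Lemma mxrank_kerE_leq : (\rank (kermx (Ematrix G)^T) <= n.+1)%N.
Proof.
apply: (mxrank_leq_of_mul_injective (P := slot_eval_mx G basis_slot)) => u uK.
exact/kerE_basis_injective/sub_kermxP.
Qed.

Lemma degree_ge0 : (0 <= degree G)%R.
Proof.
have := mxrank_kerE_leq; rewrite mxrank_ker mxrank_tr.
have := rank_leq_col (Ematrix G).
by rewrite /degree /Erank /nfaces; lia.
Qed.

End Degree.

Definition vertex_mom (S j k : nat) (b : 'I_4) : nat :=
  match val b with 0 => j | 1 => S - j | 2 => k | _ => S - k end.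

Lemma prop_corner_mom (i : 'I_8) S j k S' j' k' :
  prop_holds i S j k S' j' k' ->
  (j <= S)%N -> (k <= S)%N -> (j' <= S')%N -> (k' <= S')%N ->
  forall b, vertex_mom S j k b = vertex_mom S' j' k' (prop_corner i b).
Proof.
rewrite /vertex_mom /prop_holds => + + + + + b.
case: i => [[|[|[|[|[|[|[|[|//]]]]]]]] ?]; case: b => [[|[|[|[|//]]]] ?] /=;
  rewrite /prop_corner /= inordK //=; lia.
Qed.

Section FreeFaces.
Variables (n : nat) (G : graph n).
Local Notation F := #|faces G|.

Definition root_mx : 'M[rat]_(F, 1) := slot_eval_mx G (fun=> inl ord0).

Definition kerE_root0 := (kermx (Ematrix G)^T :&: kermx root_mx)%MS.

Definition free_dim := \rank kerE_root0^T.

Definition free_face : 'I_free_dim -> 'I_F := maxrankfun kerE_root0^T.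

Lemma const1_kerE : (const_mx 1 : 'rV[rat]_F) *m (Ematrix G)^T = 0.
Proof. by apply/rowP => i; rewrite Ematrix_row /face_val !mxE; ring. Qed.

Lemma free_dim_lt : (free_dim + Erank G < nfaces G)%N.
Proof.
have const1_ker : ((const_mx 1 : 'rV[rat]_F) <= kermx (Ematrix G)^T)%MS.
  exact/sub_kermxP/const1_kerE.
have const1_root : (const_mx 1 : 'rV[rat]_F) *m root_mx != 0.
  apply/eqP => /rowP/(_ 0).
  by rewrite slot_eval_mxE /face_val !mxE; apply/eqP/oner_neq0.
have := mxrank_cap_kermx_lt const1_ker const1_root.
rewrite /free_dim mxrank_tr -/kerE_root0 mxrank_ker mxrank_tr /Erank /nfaces.
by have := rank_leq_col (Ematrix G); lia.
Qed.

End FreeFaces.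

Section Momenta.
Variables (n : nat) (G : graph n) (r : nat).
Local Notation F := #|faces G|.

Lemma mom_vslot (a : attribution n) v b :
  mom r a (vslot v b) = vertex_mom (aS a v) (aj a v) (ak a v) b.
Proof. by case: b => [[|[|[|[|//]]]] ?]. Qed.

Definition mom_vec (a : attribution n) : 'rV[rat]_F :=
  \row_f (mom r a (face_rep f))%:R.

Definition free_mom (a : attribution n) : {ffun 'I_(free_dim G) -> nat} :=
  [ffun i => mom r a (face_rep (free_face i))].

Section Admissible.
Variable a : attribution n.
Hypothesis a_adm : admissible G r a.

Lemma admissible_bounds v : (aj a v <= aS a v)%N /\ (ak a v <= aS a v)%N.
Proof. by case: a_adm. Qed.

Lemma mom_gamma_adj x y : gamma_adj G x y -> mom r a x = mom r a y.
Proof.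
case: a_adm => _ [solid [dashed wavy_ok]].
case/orP => [/orP[/orP[|]|]|].
- by case/existsP => v /andP[/eqP-> /eqP->]; apply: solid.
- by case/existsP => q /and3P[lq /eqP-> /eqP->]; apply: dashed.
- case/existsP => v /existsP[b /and3P[vw /eqP-> /eqP->]]; rewrite !mom_vslot.
  have [jS kS] := admissible_bounds v.
  have [jS' kS'] := admissible_bounds (gpartner G v).
  exact: prop_corner_mom (wavy_ok v vw) jS kS jS' kS' b.
- by case/andP => /eqP-> /eqP->.
Qed.

Lemma mom_connect x y : connect (gamma_rel G) x y -> mom r a x = mom r a y.
Proof.
move=> /connectP[p + ->]; elim: p x => [//|z p IH] x /= /andP[xz /IH <-].
by case/orP: xz => [/mom_gamma_adj|/mom_gamma_adj/esym].
Qed.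

Lemma face_val_mom_vec s : face_val (mom_vec a) s = (mom r a s)%:R.
Proof.
rewrite /face_val mxE; congr _%:R; apply: mom_connect.
by apply/face_idxP; rewrite face_idx_rep.
Qed.

Lemma mom_vec_kerE : mom_vec a *m (Ematrix G)^T = 0.
Proof.
apply/rowP => i; rewrite Ematrix_row /= !face_val_mom_vec !mom_vslot /= mxE.
by have [jS kS] := admissible_bounds (enum_val i); rewrite !natrB //; ring.
Qed.

Lemma mom_vec_root : mom_vec a *m root_mx G = const_mx r%:R.
Proof. by apply/rowP => i; rewrite /root_mx slot_eval_mxE face_val_mom_vec mxE. Qed.

End Admissible.

Lemma mom_vec_sub_kerE_root0 (a a' : attribution n) :
  admissible G r a -> admissible G r a' ->
  (mom_vec a - mom_vec a' <= kerE_root0 G)%MS.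
Proof.
move=> a_adm a'_adm; rewrite sub_capmx; apply/andP; split; apply/sub_kermxP.
  by rewrite mulmxBl !mom_vec_kerE // subrr.
by rewrite mulmxBl !mom_vec_root // subrr.
Qed.

Lemma attribution_eq (a a' : attribution n) :
  admissible G r a -> admissible G r a' ->
  (forall s, mom r a s = mom r a' s) -> a = a'.
Proof.
move=> a_adm a'_adm same_mom; apply/ffunP => v.
have [jS kS] := admissible_bounds a_adm v.
have [jS' kS'] := admissible_bounds a'_adm v.
move: (same_mom (vslot v e1)) (same_mom (vslot v e2)) (same_mom (vslot v e3)).
move: jS kS jS' kS'; rewrite !mom_vslot /vertex_mom /aS /aj /ak /=.
case: (a v) (a' v) => [[S j] k] [[S' j'] k'] /= jS _ jS' _ ej eqSj ek.
by congr (_, _, _); lia.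
Qed.

Lemma free_mom_inj (a a' : attribution n) :
  admissible G r a -> admissible G r a' -> free_mom a = free_mom a' -> a = a'.
Proof.
move=> a_adm a'_adm /ffunP same_free.
have : mom_vec a - mom_vec a' = 0.
  apply: sub_maxrank_cols_eq0 (mom_vec_sub_kerE_root0 a_adm a'_adm) _ => i.
  by move: (same_free i); rewrite !ffunE !mxE => ->; rewrite subrr.
move/eqP; rewrite subr_eq0 => /eqP same_vec.
apply: attribution_eq => // s; apply/eqP; rewrite -(eqr_nat rat).
by rewrite -!face_val_mom_vec // same_vec.
Qed.

End Momenta.

Section MomentumBounds.
Variables (n : nat) (G : graph n) (r : nat).
Hypothesis G_wf : graph_wf G.

Definition leaf_mom (a : attribution n) : nat :=
  \sum_(q : pos n | is_leaf (gpar G) q) mom r a (slot_of_pos q).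

Variable a : attribution n.
Hypothesis a_adm : admissible G r a.

Lemma unoccupied_mom_le q :
  ~~ occupied (gpar G) q -> (mom r a (slot_of_pos q) <= leaf_mom a)%N.
Proof.
move=> q_free.
have leaf_le p : is_leaf (gpar G) p -> (mom r a (slot_of_pos p) <= leaf_mom a)%N.
  by move=> lp; rewrite /leaf_mom (bigD1 p) //= leq_addr.
case tq: (ptype (gpar G) q); first by rewrite leaf_le // /is_leaf q_free tq.
have aq : is_antileaf (gpar G) q by rewrite /is_antileaf q_free tq.
case: G_wf => _ [_ [_ [_ [onto _]]]]; have [p lp <-] := onto q aq.
by case: a_adm => _ [_ [dashed _]]; rewrite -dashed // leaf_le.
Qed.

Lemma child_mom_le (v : 'I_n) (c : 'I_3) B : (leaf_mom a <= B)%N ->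
  (forall u : 'I_n, (v < u)%N -> (aS a u <= B)%N) ->
  (mom r a (slot_of_pos (inr (v, c))) <= B)%N.
Proof.
move=> leafB belowB.
have [/existsP[u /eqP par_u]|q_free] := boolP (occupied (gpar G) (inr (v, c))).
  case: a_adm => _ [solid _]; rewrite -par_u solid /=.
  apply: leq_trans (belowB u (gpar_heap G_wf par_u)).
  by case: (admissible_bounds a_adm u).
exact: leq_trans (unoccupied_mom_le q_free) leafB.
Qed.

(* S_v is the sum of the momenta of e3(v) and e4(v), and each of these edges is
   either a half-edge, bounded by L, or the parent edge of a later vertex. *)
Lemma aS_le_leaf_mom v : (aS a v <= 2 ^ (n - v) * leaf_mom a)%N.
Proof.
have [k] := ubnP (n - v); elim: k v => [//|k IH] v; rewrite ltnS => vk.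
set B := (2 ^ (n - v.+1) * leaf_mom a)%N.
have leafB : (leaf_mom a <= B)%N by rewrite leq_pmull // expn_gt0.
have belowB (u : 'I_n) : (v < u)%N -> (aS a u <= B)%N.
  move=> vu; apply: leq_trans (IH u _) _; first by have := ltn_ord u; lia.
  by rewrite /B; apply: leq_mul => //; apply: leq_pexp2l => //; lia.
have := child_mom_le (@Ordinal 3 1 isT) leafB belowB.
have := child_mom_le (@Ordinal 3 2 isT) leafB belowB.
have [_ kS] := admissible_bounds a_adm v.
rewrite -subnSK // expnS -mulnA -/B /=; lia.
Qed.

Lemma mom_le_leaf_mom s : (mom r a s <= 2 ^ n * leaf_mom a + r)%N.
Proof.
case: s => [i|[v b]] /=; first exact: leq_addl.
apply: leq_trans (leq_addr r _); apply: (@leq_trans (aS a v)).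
  have [jS kS] := admissible_bounds a_adm v.
  by case: b => [[|[|[|[|//]]]] ?] /=; rewrite ?leq_subr.
apply: leq_trans (aS_le_leaf_mom v) _; apply: leq_mul => //.
exact: leq_pexp2l (leq_subr _ _).
Qed.

End MomentumBounds.

Section Amplitude.
Variables (n : nat) (G : graph n) (r : nat).
Hypothesis G_wf : graph_wf G.
Local Notation D := (free_dim G).
Local Notation free_mom := (free_mom G r).
Local Notation leaf_mom := (leaf_mom G r).

(* Each of the D free momenta is at most 2^n L + r, where L is the leaf
   momentum, so their sum is at most mom_scale * (L + r). *)
Definition mom_scale : nat := (D * 2 ^ n).+1.

Lemma sum_free_mom_divn_le (a : attribution n) : admissible G r a ->
  (\sum_i (free_mom a i %/ mom_scale) <= leaf_mom a + r)%N.
Proof.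
move=> a_adm; rewrite -(@leq_pmul2l mom_scale) //.
have div_le :
    (mom_scale * \sum_i (free_mom a i %/ mom_scale) <= \sum_i free_mom a i)%N.
  by rewrite big_distrr /=; apply: leq_sum => i _; rewrite mulnC leq_divM.
have sum_le : (\sum_i free_mom a i <= D * (2 ^ n * leaf_mom a + r))%N.
  rewrite -[D in (_ <= D * _)%N]card_ord -sum_nat_const.
  by apply: leq_sum => i _; rewrite ffunE mom_le_leaf_mom.
apply: leq_trans div_le (leq_trans sum_le _).
have pow_gt0 : (0 < 2 ^ n)%N by rewrite expn_gt0.
by rewrite /mom_scale; nia.
Qed.

Lemma leaf_weight_le (R : realFieldType) (p q : R) (a : attribution n) :
  admissible G r a -> 0 < p <= q -> 2^-1 <= q <= 1 ->
  p ^+ leaf_mom a <= 2 ^+ r * \prod_i q ^+ (free_mom a i %/ mom_scale).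
Proof.
move=> a_adm /andP[p0 pq] /andP[q_half q1].
have q0 : 0 <= q by apply: le_trans pq; apply: ltW.
apply: (@le_trans _ _ (q ^+ leaf_mom a)); first by rewrite lerXn2r // nnegrE ltW.
rewrite prodrXr.
apply: (@le_trans _ _ (2 ^+ r * q ^+ (leaf_mom a + r))); last first.
  by rewrite ler_wpM2l ?exprn_ge0 // ler_wiXn2l // sum_free_mom_divn_le.
rewrite exprD mulrCA -exprMn ler_peMr ?exprn_ge0 // exprn_ege1 //; lra.
Qed.

Lemma sum_admissible_weight_le (R : realFieldType) (p q : R)
    (s : seq (attribution n)) :
  0 < p <= q -> 2^-1 <= q < 1 -> uniq s ->
  (forall a, a \in s -> admissible G r a) ->
  \sum_(a <- s) p ^+ leaf_mom a <= 2 ^+ r * (mom_scale%:R / (1 - q)) ^+ D.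
Proof.
move=> pq /andP[q_half q1] s_uniq s_adm.
have q0 : 0 <= q by apply: le_trans q_half; rewrite invr_ge0.
pose weight a := \prod_i q ^+ (free_mom a i %/ mom_scale).
apply: (@le_trans _ _ (\sum_(a <- s) 2 ^+ r * weight a)).
  rewrite big_seq_cond [leRHS]big_seq_cond; apply: ler_sum => a /andP[sa _].
  by apply: leaf_weight_le (s_adm a sa) pq _; rewrite q_half ltW.
rewrite -mulr_sumr ler_wpM2l ?exprn_ge0 // sum_prod_expr_divn_le ?q0 //.
by move=> a b sa sb; apply: free_mom_inj; apply: s_adm.
Qed.

Lemma esum_admissible_le (R : realType) (p : R) : 0 < p < 1 ->
  (\esum_(a in [set a : attribution n | admissible G r a])
      (\prod_(q : pos n | is_leaf (gpar G) q) p ^+ mom r a (slot_of_pos q))%:E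
   <= (2 ^+ r * (2 * mom_scale%:R) ^+ D * Nconst p ^+ D)%:E)%E.
Proof.
case/andP => p0 p1; have N_ge1 : 1 <= Nconst p by rewrite invf_ge1; lra.
have [q [pq q_half q1 qN]] : exists q : R,
    [/\ p <= q, 2^-1 <= q, q < 1 & (1 - q)^-1 <= 2 * Nconst p].
  have [p_half|p_half] := leP p 2^-1.
    exists 2^-1; split => //; first lra.
    have half : 1 - 2^-1 = 2^-1 :> R by field.
    by rewrite half invrK; lra.
  by exists p; split => //; [lra | rewrite -/(Nconst p); lra].
apply: ereal.ge_ereal_sup => _ [X [finX XA] <-].
rewrite fsbig_finite //= sumEFin lee_fin.
under eq_bigr do rewrite prodrXr -/(leaf_mom _).
apply: le_trans (sum_admissible_weight_le (q := q) _ _ (finmap.fset_uniq _) _) _.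
- by rewrite p0.
- by rewrite q_half.
- by move=> a; rewrite in_fset_set // inE => /XA.
rewrite -mulrA -exprMn ler_wpM2l ?exprn_ge0 // lerXn2r ?nnegrE //.
- by rewrite mulr_ge0 // invr_ge0 subr_ge0 ltW.
- by rewrite !mulr_ge0 ?ler0n // (le_trans ler01 N_ge1).
by rewrite [2 * _]mulrC -mulrA; apply: ler_wpM2l.
Qed.

End Amplitude.

Unset Implicit Arguments.

Theorem proposition1 (R : realType) (n : nat) (G : graph n) (r : nat) :
  graph_wf G ->
  (0 <= degree G)%R /\
  exists C : R, forall p : R, 0 < p < 1 ->
    (amplitude p G r <= (C * Nconst p ^ (- degree G))%:E)%E.
Proof.
move=> G_wf; split; first exact: degree_ge0.
exists (2 ^+ r * (2 * (mom_scale G)%:R) ^+ free_dim G) => p p01.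
have N_ge1 : 1 <= Nconst p by case/andP: p01 => p0 p1; rewrite invf_ge1; lra.
have N_gt0 : 0 < Nconst p by apply: lt_le_trans N_ge1.
have deg_le : (- (n%:Z) + (free_dim G)%:Z <= - degree G)%R.
  by have := free_dim_lt G; rewrite /degree /nfaces; lia.
rewrite /amplitude; apply: le_trans (lee_wpmul2l _ (esum_admissible_le r G_wf p01)) _.
  by rewrite lee_fin invr_ge0 exprn_ge0 // ltW.
rewrite -EFinM lee_fin mulrCA; apply: ler_wpM2l.
  by apply/mulr_ge0; apply/exprn_ge0 => //; apply/mulr_ge0.
rewrite exprnN exprnP -exprzDr ?unitfE ?gt_eqF //.
exact: ler_weXz2l N_ge1 _ _ deg_le.
Qed.
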